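(* Let $A \in \mathbb{R}^{n\times n}$ be a full-rank real matrix all of whose eigenvalues have negative real part, let $P = P^\top \in \mathbb{R}^{n\times n}$, and set $U(\bm{x}) = \tfrac12 \bm{x}^\top P \bm{x}$. Then the decomposition $A\bm{x} = -\nabla U(\bm{x}) + f_U(\bm{x})$ holds for all $\bm{x}\in\mathbb{R}^n$ with $f_U(\bm{x}) = (A+P)\bm{x}$. Suppose further that $P$ is an optimal solution of the optimization problem \[ \text{maximize } \operatorname{tr}(P) \quad \text{subject to} \quad P = P^\top,\quad P(A+P) \preceq 0 . \] Then $PA + A^\top P + 2P^2 = 0$, and hence $\nabla U(\bm{x}) \cdot f_U(\bm{x}) = 0$ for all $\bm{x}\in\mathbb{R}^n$.
   Context: For a (not necessarily symmetric) square matrix $M$, the constraint $M \preceq 0$ means $\bm{x}^\top M \bm{x} \le 0$ for all $\bm{x}\in\mathbb{R}^n$, i.e. the symmetric part $\tfrac12(M+M^\top)$ is negative semidefinite; thus $P(A+P)\preceq 0$ is equivalent to $PA + A^\top P + 2P^2 \preceq 0$. $\operatorname{tr}$ denotes the trace. *)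

(* The real field R is modelled as the real subfield
   (Num.real) of an arbitrary numeric algebraically closed field C
   (e.g. C = complex numbers), so that complex eigenvalues make sense. *)
From HB Require Import structures.
From mathcomp Require Import all_boot all_order all_algebra.
Set Implicit Arguments. Unset Strict Implicit. Unset Printing Implicit Defensive.
Import Order.TTheory GRing.Theory Num.Theory.
Local Open Scope ring_scope.

(* M ⪯ 0 : x^T M x <= 0 for all real vectors x (M not necessarily symmetric) *)
Definition nsd (C : numClosedFieldType) (n : nat) (M : 'M[C]_n) : Prop :=
  forall x : 'cV[C]_n, x \is a realmx -> (x^T *m M *m x) 0 0 <= 0.

Definition hurwitz (C : numClosedFieldType) (n : nat) (A : 'M[C]_n) : Prop :=
  forall z : C, eigenvalue A z -> 'Re z < 0.

Definition feasible (C : numClosedFieldType) (n : nat) (A P : 'M[C]_n) : Prop :=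
  P \is a realmx /\ P^T = P /\ nsd (P *m (A + P)).

Definition optimal (C : numClosedFieldType) (n : nat) (A P : 'M[C]_n) : Prop :=
  feasible A P /\ forall Q : 'M[C]_n, feasible A Q -> \tr Q <= \tr P.

Definition U (C : numClosedFieldType) (n : nat) (P : 'M[C]_n) (x : 'cV[C]_n) : C :=
  2^-1 * (x^T *m P *m x) 0 0.

(* gradient of U for symmetric P: ∇U(x) = P x *)
Definition gradU (C : numClosedFieldType) (n : nat) (P : 'M[C]_n) (x : 'cV[C]_n)
  : 'cV[C]_n := P *m x.

Definition fU (C : numClosedFieldType) (n : nat) (A P : 'M[C]_n) (x : 'cV[C]_n)
  : 'cV[C]_n := (A + P) *m x.

From HB Require Import structures.
From mathcomp Require Import all_boot all_order all_algebra.
From mathcomp Require Import ring.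

(* Let M := PA + A^T P + 2P^2 = P(A+P) + (P(A+P))^T and let B := A + 2P be its
   closed-loop matrix; feasibility of P says that M is negative semidefinite on
   real vectors.  If Py = 0 then y^T M y = 2 (Py).(A+P)y = 0, hence My = 0, i.e.
   PAy = 0: ker P is A-invariant and annihilated by MB, so MB = MHP for a real H.
   Suppose M <> 0; then tr M < 0 and some t gives tr (P + tM) = -1.  For
   Q := P - e(P + tM) one computes, with u = Px and v = Mx,
     x^T Q(A+Q) x = (1-e) x^T P(A+P) x - e|u|^2 - e t (H^T v).u + e^2 |u + tv|^2,
   and since |v|^2 <= c (-x^T M x), for small e > 0 the last two terms are
   absorbed by AM-GM.  So Q is feasible with tr Q = tr P + e, contradicting
   optimality.  Finally grad U . f_U = x^T P(A+P) x = x^T M x / 2 = 0. *)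

Set Implicit Arguments.
Unset Strict Implicit.
Unset Printing Implicit Defensive.

Import Order.TTheory GRing.Theory Num.Theory Num.Def.
Local Open Scope ring_scope.

Lemma realmx_trmx {C : numClosedFieldType} m p (X : 'M[C]_(m, p)) :
  X \is a realmx -> X^T \is a realmx.
Proof. by move=> /mxOverP Xr; apply/mxOverP => i j; rewrite mxE. Qed.

Lemma conjC_fixed_realmx {C : numClosedFieldType} m p (X : 'M[C]_(m, p)) :
  map_mx conjC X = X -> X \is a realmx.
Proof.
by move=> XC; apply/mxOverP => i j; apply/CrealP; rewrite -{2}XC mxE.
Qed.

Lemma realmxB {C : numClosedFieldType} m p (X Y : 'M[C]_(m, p)) :
  X \is a realmx -> Y \is a realmx -> X - Y \is a realmx.
Proof.
by move=> /mxOverP Xr /mxOverP Yr; apply/mxOverP => i j; rewrite !mxE rpredB.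
Qed.

Section RealDot.
Context {C : numClosedFieldType} {n : nat}.
Implicit Types (u v w : 'cV[C]_n).

Definition vdot u v : C := (u^T *m v) 0 0.

Lemma vdot_real u v : u \is a realmx -> v \is a realmx -> vdot u v \is Num.real.
Proof.
by move=> ur vr; have /mxOverP := mxOverM (realmx_trmx ur) vr; apply.
Qed.

Lemma vdotC u v : vdot u v = vdot v u.
Proof. by rewrite /vdot -[v^T *m u]trmxK trmx_mul trmxK [RHS]mxE. Qed.

Lemma vdot0l v : vdot 0 v = 0.
Proof. by rewrite /vdot trmx0 mul0mx mxE. Qed.

Lemma vdotDl u v w : vdot (u + v) w = vdot u w + vdot v w.
Proof. by rewrite /vdot linearD /= mulmxDl mxE. Qed.

Lemma vdotDr u v w : vdot u (v + w) = vdot u v + vdot u w.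
Proof. by rewrite /vdot mulmxDr mxE. Qed.

Lemma vdotZl a u v : vdot (a *: u) v = a * vdot u v.
Proof. by rewrite /vdot linearZ /= -scalemxAl mxE. Qed.

Lemma vdotZr a u v : vdot u (a *: v) = a * vdot u v.
Proof. by rewrite /vdot -scalemxAr mxE. Qed.

Lemma vdotNl u v : vdot (- u) v = - vdot u v.
Proof. by rewrite -scaleN1r vdotZl mulN1r. Qed.

Lemma vdotNr u v : vdot u (- v) = - vdot u v.
Proof. by rewrite -scaleN1r vdotZr mulN1r. Qed.

Lemma vdot_mulmxr u (X : 'M[C]_n) v : vdot u (X *m v) = vdot (X^T *m u) v.
Proof. by rewrite /vdot trmx_mul trmxK mulmxA. Qed.

Lemma vdot_mulmx_sym u (X : 'M[C]_n) v :
  X^T = X -> vdot u (X *m v) = vdot v (X *m u).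
Proof. by move=> Xs; rewrite vdot_mulmxr Xs vdotC. Qed.

Lemma quad_mulmx_sym (X Y : 'M[C]_n) v :
  X^T = X -> (v^T *m (X *m Y) *m v) 0 0 = vdot (X *m v) (Y *m v).
Proof. by move=> Xs; rewrite -!mulmxA -/(vdot v _) vdot_mulmxr Xs. Qed.

Lemma vdot_ge0 v : v \is a realmx -> 0 <= vdot v v.
Proof.
move=> /mxOverP vr; rewrite /vdot mxE; apply: sumr_ge0 => i _.
by rewrite mxE -expr2 -realEsqr.
Qed.

Lemma vdot_delta i v : vdot (delta_mx i 0) v = v i 0.
Proof. by rewrite /vdot trmx_delta -rowE mxE. Qed.

Lemma realmx_delta i : (delta_mx i 0 : 'cV[C]_n) \is a realmx.
Proof.
by apply/mxOverP => j k; rewrite mxE; case: (_ && _); rewrite ?real0 ?real1.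
Qed.

End RealDot.

Lemma nsd_vdot {C : numClosedFieldType} n (M : 'M[C]_n) x :
  nsd M -> x \is a realmx -> vdot x (M *m x) <= 0.
Proof. by move=> Mn xr; rewrite /vdot mulmxA; apply: Mn. Qed.

Section NonpositiveForm.
Context {C : numClosedFieldType} {n : nat} (M : 'M[C]_n).
Hypotheses (Mr : M \is a realmx) (Ms : M^T = M) (Mn : nsd M).

Lemma nsd_cauchy_schwarz y z : y \is a realmx -> z \is a realmx ->
  vdot y (M *m z) ^+ 2 <= vdot y (M *m y) * vdot z (M *m z).
Proof.
move=> yr zr; have Mxr x : x \is a realmx -> M *m x \is a realmx by apply: mxOverM.
set qy := vdot y (M *m y); set qz := vdot z (M *m z); set b := vdot y (M *m z).
have qzr : qz \is Num.real by rewrite vdot_real ?Mxr.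
have br : b \is Num.real by rewrite vdot_real ?Mxr.
have qz_le0 : qz <= 0 by apply: nsd_vdot.
have quad_le0 r : r \is Num.real -> qy + 2%:R * r * b + r ^+ 2 * qz <= 0.
  move=> rr; have := nsd_vdot Mn (realmxD yr (mxOverZ rr zr)).
  rewrite mulmxDr -scalemxAr !(vdotDl, vdotDr, vdotZl, vdotZr).
  by rewrite (vdot_mulmx_sym z _ Ms) -/qy -/qz -/b; congr (_ <= _); ring.
have [qz_lt0 | qz_ge0] := real_ltP qzr (real0 _).
  have := quad_le0 (- b / qz); rewrite rpredM ?rpredN ?rpredV // => /(_ isT).
  have qz_neq0 : qz != 0 by rewrite lt_eqF.
  rewrite -(ler_nM2r qz_lt0) mul0r.
  have -> : (qy + 2%:R * (- b / qz) * b + (- b / qz) ^+ 2 * qz) * qz = qy * qz - b ^+ 2.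
    by field.
  by rewrite subr_ge0.
have qz0 : qz = 0 by apply/eqP; rewrite eq_le qz_le0.
suff -> : b = 0 by rewrite qz0 expr0n mulr0.
apply/eqP/negP => b_neq0.
have qyr : qy \is Num.real by rewrite vdot_real ?Mxr.
pose r := (1 - qy) / (2%:R * b).
have := quad_le0 r; rewrite rpredM ?rpredV ?rpredM ?rpredB ?rpred1 ?realn // => /(_ isT).
have -> : qy + 2%:R * r * b + r ^+ 2 * qz = 1.
  by rewrite qz0 /r; field; apply/negP.
by rewrite ler10.
Qed.

Lemma nsd_mulmx_eq0 y : y \is a realmx -> vdot y (M *m y) = 0 -> M *m y = 0.
Proof.
move=> yr y0; apply/matrixP => i j; rewrite ord1 [RHS]mxE.
have := nsd_cauchy_schwarz (realmx_delta i) yr.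
rewrite y0 mulr0 vdot_delta => sq_le0.
have /mxOverP/(_ i 0) Myr := mxOverM Mr yr.
by apply/eqP; rewrite -sqrf_eq0 eq_le sq_le0 -realEsqr.
Qed.

Lemma nsd_mxtrace_eq0 : \tr M = 0 -> M = 0.
Proof.
move=> tr0; have diag_le0 i : M i i <= 0.
  by have := nsd_vdot Mn (realmx_delta i); rewrite vdot_delta -colE mxE.
have diag0 i : M i i = 0.
  apply/eqP; rewrite -oppr_eq0; apply/eqP.
  apply: (@psumr_eq0P _ _ predT (fun i => - M i i)) => // [k _|].
    by rewrite oppr_ge0.
  by rewrite sumrN -/(mxtrace M) tr0 oppr0.
apply/matrixP => i j.
have /matrixP/(_ i 0) : M *m (delta_mx j 0 : 'cV_n) = 0.
  by apply: nsd_mulmx_eq0 (realmx_delta j) _; rewrite vdot_delta -colE mxE diag0.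
by rewrite -colE !mxE.
Qed.

End NonpositiveForm.

Section Bounds.
Context {C : numClosedFieldType} {n : nat}.
Implicit Types (y z : 'cV[C]_n).

Lemma cauchy_schwarz y z : y \is a realmx -> z \is a realmx ->
  vdot y z ^+ 2 <= vdot y y * vdot z z.
Proof.
have N1r : (- 1%:M : 'M[C]_n) \is a realmx.
  by apply/mxOverP => i j; rewrite !mxE rpredN rpredMn ?rpred1.
have N1s : (- 1%:M : 'M[C]_n)^T = - 1%:M by rewrite linearN /= trmx1.
have N1n : nsd (- 1%:M : 'M[C]_n).
  by move=> x xr; rewrite -mulmxA -/(vdot x _) mulNmx mul1mx vdotNr oppr_le0 vdot_ge0.
move=> yr zr; have := nsd_cauchy_schwarz N1r N1s N1n yr zr.
by rewrite !mulNmx !mul1mx !vdotNr sqrrN mulrNN.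
Qed.

Lemma mulmx_bound (F : 'M[C]_n) : F \is a realmx ->
  exists2 c, 0 <= c & forall z, z \is a realmx -> vdot (F *m z) (F *m z) <= c * vdot z z.
Proof.
move=> Fr; pose r i := F^T *m (delta_mx i 0 : 'cV[C]_n).
have rr i : r i \is a realmx by rewrite mxOverM ?realmx_trmx ?realmx_delta.
exists (\sum_i vdot (r i) (r i)) => [|z zr].
  by rewrite sumr_ge0 // => i _; rewrite vdot_ge0.
rewrite {1}/vdot mxE mulr_suml; apply: ler_sum => i _.
have -> : (F *m z)^T 0 i * (F *m z) i 0 = vdot (r i) z ^+ 2.
  by rewrite -vdot_mulmxr vdot_delta mxE expr2.
exact: cauchy_schwarz.
Qed.

Lemma nsd_mulmx_bound (M : 'M[C]_n) : M \is a realmx -> M^T = M -> nsd M ->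
  exists2 c, 0 <= c &
    forall x, x \is a realmx -> vdot (M *m x) (M *m x) <= c * - vdot x (M *m x).
Proof.
move=> Mr Ms Mn; have Mxr (x : 'cV_n) : x \is a realmx -> M *m x \is a realmx.
  exact: mxOverM.
have [c0 c0_ge0 hc0] := mulmx_bound Mr.
have form_bound z : z \is a realmx -> 2%:R * - vdot z (M *m z) <= (1 + c0) * vdot z z.
  move=> zr; have := vdot_ge0 (realmxD zr (Mxr z zr)).
  rewrite !(vdotDl, vdotDr) (vdotC (M *m z) z) => sq_ge0.
  have := hc0 z zr; rewrite -subr_ge0 => /(addr_ge0 sq_ge0).
  set zz := vdot z z; set zMz := vdot z (M *m z); set w := vdot (M *m z) (M *m z).
  have -> : zz + zMz + (zMz + w) + (c0 * zz - w) = (1 + c0) * zz - 2%:R * - zMz by ring.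
  by rewrite subr_ge0.
exists (1 + c0) => [|x xr]; first by rewrite addr_ge0 ?ler01.
set w := vdot (M *m x) (M *m x); set q := - vdot x (M *m x).
have q_ge0 : 0 <= q by rewrite oppr_ge0 nsd_vdot.
have w_ge0 : 0 <= w by rewrite vdot_ge0 ?Mxr.
(* Cauchy-Schwarz for the form of M at (x, Mx), then form_bound at Mx. *)
have w2_le : 2%:R * w ^+ 2 <= q * ((1 + c0) * w).
  have := nsd_cauchy_schwarz Mr Ms Mn xr (Mxr x xr).
  rewrite vdot_mulmxr Ms -/w -(ler_pM2l (ltr0n _ 2)) => /le_trans; apply.
  have -> : 2%:R * (vdot x (M *m x) * vdot (M *m x) (M *m (M *m x)))
    = q * (2%:R * - vdot (M *m x) (M *m (M *m x))) by rewrite /q; ring.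
  by rewrite ler_wpM2l // form_bound ?Mxr.
have [-> | w_neq0] := eqVneq w 0; first by rewrite mulr_ge0 ?addr_ge0.
have w_gt0 : 0 < w by rewrite lt_def w_neq0.
rewrite -(ler_pM2r w_gt0) -mulrA mulrCA; apply: le_trans w2_le.
by rewrite -expr2 ler_peMl ?exprn_ge0 // ler1n.
Qed.

End Bounds.

Lemma perturbation_estimate {C : numClosedFieldType} {n : nat} (u v g : 'cV[C]_n)
    (f t e cH c : C) :
  u \is a realmx -> v \is a realmx -> g \is a realmx -> t \is Num.real ->
  f <= 0 -> vdot g g <= cH * vdot v v -> vdot v v <= c * - f -> 0 <= cH -> 0 <= c ->
  0 <= e -> 4%:R * e <= 1 -> e * (1 + t ^+ 2 * c * (cH + 1)) <= 1 ->
  (1 - e) * f - e * vdot u u - e * t * vdot g u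
    + e ^+ 2 * vdot (u + t *: v) (u + t *: v) <= 0.
Proof.
move=> ur vr gr tr f_le0 hg hv cH_ge0 c_ge0 e_ge0 e_le4 e_leZ.
have square s (w : 'cV[C]_n) : vdot (u + s *: w) (u + s *: w)
    = vdot u u + 2%:R * s * vdot u w + s ^+ 2 * vdot w w.
  by rewrite !(vdotDl, vdotDr, vdotZl, vdotZr) (vdotC w u); ring.
have sq1 : 0 <= vdot u u + 2%:R * t * vdot g u + t ^+ 2 * vdot g g.
  by rewrite (vdotC g) -square vdot_ge0 ?realmxD ?mxOverZ.
have sq2 : 0 <= vdot u u + 2%:R * (- t) * vdot u v + (- t) ^+ 2 * vdot v v.
  by rewrite -square vdot_ge0 ?realmxD ?mxOverZ ?rpredN.
rewrite square; move: sq1 sq2 hg hv; rewrite sqrrN mulrN mulNr.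
set uu := vdot u u; set uv := vdot u v; set vv := vdot v v.
set gu := vdot g u; set gg := vdot g g => sq1 sq2 hg hv.
have t2_ge0 : 0 <= t ^+ 2 by rewrite -realEsqr.
have e2_ge0 : 0 <= e / 2%:R by rewrite divr_ge0 ?ler0n.
have e_le1 : 2%:R * e <= 1 by apply: le_trans e_le4; rewrite ler_wpM2r ?ler_nat.
have K_ge0 : 0 <= 1 - e * (1 + t ^+ 2 * c * (cH + 1))
                  + e * t ^+ 2 * c * (cH / 2%:R + (1 - 2%:R * e)).
  apply: addr_ge0; first by rewrite subr_ge0.
  apply: mulr_ge0; first by apply: mulr_ge0 c_ge0; apply: mulr_ge0.
  by rewrite addr_ge0 ?divr_ge0 ?subr_ge0 ?ler0n.
(* AM-GM: [-2 t g.u <= |u|^2 + t^2 |g|^2] (sq1) and [|u + t v|^2 <= 2 |u|^2 + 2 t^2 |v|^2]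
   (sq2); once [e <= 1/4] what remains is a nonnegative multiple of [f]. *)
pose S := (- f) * (1 - e * (1 + t ^+ 2 * c * (cH + 1))
                   + e * t ^+ 2 * c * (cH / 2%:R + (1 - 2%:R * e)))
  + e / 2%:R * (1 - 4%:R * e) * uu
  + e / 2%:R * (uu + 2%:R * t * gu + t ^+ 2 * gg)
  + e ^+ 2 * (uu - 2%:R * t * uv + t ^+ 2 * vv)
  + e / 2%:R * t ^+ 2 * (cH * vv - gg)
  + t ^+ 2 * (e * cH / 2%:R + 2%:R * e ^+ 2) * (c * - f - vv).
have S_ge0 : 0 <= S.
  repeat apply: addr_ge0.
  - by apply: mulr_ge0 K_ge0; rewrite oppr_ge0.
  - by apply: mulr_ge0 (mulr_ge0 e2_ge0 _) (vdot_ge0 ur); rewrite subr_ge0.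
  - exact: mulr_ge0 e2_ge0 sq1.
  - exact: mulr_ge0 (exprn_ge0 _ e_ge0) sq2.
  - by apply: mulr_ge0 (mulr_ge0 e2_ge0 t2_ge0) _; rewrite subr_ge0.
  - apply: mulr_ge0; last by rewrite subr_ge0.
    apply: mulr_ge0 t2_ge0 (addr_ge0 _ _); first by rewrite divr_ge0 ?mulr_ge0 ?ler0n.
    by rewrite mulr_ge0 ?ler0n ?exprn_ge0.
have -> : (1 - e) * f - e * uu - e * t * gu + e ^+ 2 * (uu + 2%:R * t * uv + t ^+ 2 * vv)
    = - S by rewrite /S; field.
by rewrite oppr_le0.
Qed.

Lemma realmx_cokermx {C : numClosedFieldType} m p (X : 'M[C]_(m, p)) :
  X \is a realmx -> cokermx X \is a realmx.
Proof. by move=> Xr; apply: conjC_fixed_realmx; rewrite map_cokermx realmxC. Qed.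

Lemma realmx_pinvmx {C : numClosedFieldType} m p (X : 'M[C]_(m, p)) :
  X \is a realmx -> pinvmx X \is a realmx.
Proof. by move=> Xr; apply: conjC_fixed_realmx; rewrite map_pinvmx realmxC. Qed.

Lemma mxtrace_real {C : numClosedFieldType} n (X : 'M[C]_n) :
  X \is a realmx -> \tr X \is Num.real.
Proof. by move=> /mxOverP Xr; apply: rpred_sum => i _. Qed.

Definition riccati {C : numClosedFieldType} {n : nat} (A P : 'M[C]_n) : 'M[C]_n :=
  P *m A + A^T *m P + 2%:R *: (P *m P).

Section Riccati.
Context {C : numClosedFieldType} {n : nat} (A P : 'M[C]_n).
Hypotheses (Ar : A \is a realmx) (Pr : P \is a realmx) (Ps : P^T = P).
Implicit Types (x y : 'cV[C]_n).
Local Notation M := (riccati A P).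

Lemma riccati_real : M \is a realmx.
Proof.
by rewrite /riccati !realmxD ?mxOverZ ?realn ?mxOverM ?realmx_trmx.
Qed.

Lemma riccati_sym : M^T = M.
Proof.
rewrite /riccati !linearD /= linearZ /= !trmx_mul trmxK Ps.
by rewrite [A^T *m P + _]addrC.
Qed.

Lemma vdot_riccati x : vdot x (M *m x) = 2%:R * vdot (P *m x) ((A + P) *m x).
Proof.
rewrite /riccati !mulmxDl -!mulmxA -scalemxAl -mulmxA !(vdotDr, vdotZr).
rewrite !(vdot_mulmxr x) Ps trmxK (vdotC (A *m x)); ring.
Qed.

Lemma nsd_riccati : nsd (P *m (A + P)) -> nsd M.
Proof.
move=> hfeas x xr; rewrite -mulmxA -/(vdot x _) vdot_riccati.
by rewrite -quad_mulmx_sym // pmulr_rle0 ?ltr0n ?hfeas.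
Qed.

Hypothesis hfeas : nsd (P *m (A + P)).

Lemma riccati_ker y : y \is a realmx -> P *m y = 0 -> M *m y = 0.
Proof.
move=> yr Py; apply: (nsd_mulmx_eq0 riccati_real riccati_sym (nsd_riccati hfeas) yr).
by rewrite vdot_riccati Py vdot0l mulr0.
Qed.

Lemma ker_mulmx_invariant y : y \is a realmx -> P *m y = 0 -> P *m (A *m y) = 0.
Proof.
move=> yr Py; have := riccati_ker yr Py.
by rewrite /riccati !mulmxDl -!mulmxA -scalemxAl -mulmxA Py !mulmx0 scaler0 !addr0.
Qed.

Lemma riccati_closed_loop_ker y : y \is a realmx -> P *m y = 0 ->
  M *m ((A + 2%:R *: P) *m y) = 0.
Proof.
move=> yr Py; rewrite [(A + _) *m y]mulmxDl -scalemxAl Py scaler0 addr0.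
by apply: riccati_ker; rewrite ?mxOverM ?ker_mulmx_invariant.
Qed.

Lemma riccati_closed_loop_sub : (M *m (A + 2%:R *: P) <= P)%MS.
Proof.
rewrite submxE; apply/eqP/matrixP => i j; rewrite [RHS]mxE.
have colr : col j (cokermx P) \is a realmx.
  by rewrite colE mxOverM ?realmx_cokermx ?realmx_delta.
have colP : P *m col j (cokermx P) = 0 by rewrite colE mulmxA mulmx_coker mul0mx.
have /matrixP/(_ i 0) := riccati_closed_loop_ker colr colP.
by rewrite colE !mulmxA -colE !mxE.
Qed.

Lemma riccati_closed_loop_factor :
  exists2 H : 'M[C]_n, H \is a realmx & M *m (A + 2%:R *: P) = M *m H *m P.
Proof.
exists ((A + 2%:R *: P) *m pinvmx P).
  by rewrite mxOverM ?realmx_pinvmx ?realmxD ?mxOverZ ?realn.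
by rewrite mulmxA mulmxKpV // riccati_closed_loop_sub.
Qed.

Lemma perturbation_feasible (H : 'M[C]_n) (cH c t e : C) :
  H \is a realmx -> M *m (A + 2%:R *: P) = M *m H *m P ->
  (forall z, z \is a realmx -> vdot (H^T *m z) (H^T *m z) <= cH * vdot z z) ->
  (forall x, x \is a realmx -> vdot (M *m x) (M *m x) <= c * - vdot x (M *m x)) ->
  0 <= cH -> 0 <= c -> t \is Num.real ->
  0 <= e -> 4%:R * e <= 1 -> e * (1 + t ^+ 2 * (2%:R * c) * (cH + 1)) <= 1 ->
  feasible A (P - e *: (P + t *: M)).
Proof.
move=> Hr MH hH hM cH_ge0 c_ge0 tr e_ge0 e_le4 e_leZ.
have Mr := riccati_real; have Ms := riccati_sym.
set Q := P - e *: (P + t *: M).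
have Qs : Q^T = Q by rewrite /Q linearB /= !linearZ /= linearD /= linearZ /= Ps Ms.
have er : e \is Num.real := ger0_real e_ge0.
split; first by rewrite realmxB ?mxOverZ ?realmxD ?mxOverZ.
split=> // x xr; rewrite quad_mulmx_sym //.
set u := P *m x; set v := M *m x; set a := A *m x; set g := H^T *m v.
have ur : u \is a realmx by rewrite mxOverM.
have vr : v \is a realmx by rewrite mxOverM.
have Qx : Q *m x = u - e *: (u + t *: v).
  by rewrite /Q mulmxBl -!scalemxAl mulmxDl -scalemxAl.
have cross : vdot v a + 2%:R * vdot u v = vdot g u.
  rewrite (vdotC u) -vdotZr -vdotDr.
  have -> : a + 2%:R *: u = (A + 2%:R *: P) *m x by rewrite mulmxDl -scalemxAl.
  rewrite /v -[in vdot (M *m x) _]Ms -vdot_mulmxr mulmxA MH -!mulmxA.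
  by rewrite !vdot_mulmxr Ms.
have hfe : vdot u (a + u) <= 0 by rewrite -mulmxDl -quad_mulmx_sym // hfeas.
have hv : vdot v v <= 2%:R * c * - vdot u (a + u).
  have -> : 2%:R * c * - vdot u (a + u) = c * - vdot x (M *m x).
    by rewrite vdot_riccati mulmxDl; ring.
  exact: hM.
have expand : vdot (u - e *: (u + t *: v)) (a + (u - e *: (u + t *: v)))
    = (1 - e) * vdot u (a + u) - e * vdot u u - e * t * (vdot v a + 2%:R * vdot u v)
      + e ^+ 2 * vdot (u + t *: v) (u + t *: v).
  by rewrite !(vdotDl, vdotDr, vdotNl, vdotNr, vdotZl, vdotZr) (vdotC v u); ring.
rewrite [(A + Q) *m x]mulmxDl Qx -/a expand cross.
have gr : g \is a realmx by rewrite mxOverM ?realmx_trmx.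
have c2_ge0 : 0 <= 2%:R * c by rewrite mulr_ge0 ?ler0n.
exact: perturbation_estimate ur vr gr tr hfe (hH v vr) hv cH_ge0 c2_ge0 e_ge0 e_le4 e_leZ.
Qed.

Lemma optimal_riccati_eq0 : (forall Q, feasible A Q -> \tr Q <= \tr P) -> M = 0.
Proof.
move=> hopt; have Mn := nsd_riccati hfeas.
have [// | M_neq0] := eqVneq M 0; exfalso.
have trM_neq0 : \tr M != 0.
  by apply: contra M_neq0 => /eqP /(nsd_mxtrace_eq0 riccati_real riccati_sym Mn) ->.
have [H Hr MH] := riccati_closed_loop_factor.
have [cH cH_ge0 hH] := mulmx_bound (realmx_trmx Hr).
have [c c_ge0 hM] := nsd_mulmx_bound riccati_real riccati_sym Mn.
pose t := - (\tr P + 1) / \tr M.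
have tr : t \is Num.real.
  by rewrite rpredM ?rpredN ?rpredV ?rpredD ?rpred1 ?mxtrace_real ?riccati_real.
pose Z := 1 + t ^+ 2 * (2%:R * c) * (cH + 1).
have t2_ge0 : 0 <= t ^+ 2 by rewrite -realEsqr.
have Z_ge1 : 1 <= Z.
  rewrite lerDl; apply: mulr_ge0 (mulr_ge0 t2_ge0 _) _.
  - by rewrite mulr_ge0 ?ler0n.
  - by rewrite addr_ge0.
have Z_gt0 : 0 < Z := lt_le_trans ltr01 Z_ge1.
pose e := (4%:R * Z)^-1.
have e_gt0 : 0 < e by rewrite invr_gt0 mulr_gt0 ?ltr0n.
have e_le4 : 4%:R * e <= 1.
  by rewrite /e invfM mulrA divff ?pnatr_eq0 // mul1r invf_le1.
have e_leZ : e * Z <= 1.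
  by rewrite /e invfM -mulrA mulVf ?gt_eqF // mulr1 invf_le1 ?ltr0n ?ler1n.
have := hopt _ (perturbation_feasible Hr MH hH hM cH_ge0 c_ge0 tr (ltW e_gt0) e_le4 e_leZ).
have -> : \tr (P - e *: (P + t *: M)) = \tr P + e.
  by rewrite raddfB /= !mxtraceZ mxtraceD mxtraceZ /t; field.
by rewrite gerDl => /(lt_le_trans e_gt0); rewrite ltxx.
Qed.

End Riccati.

Theorem mainTheorem1 (C : numClosedFieldType) (n : nat) (A P : 'M[C]_n)
  (hAreal : A \is a realmx) (hAfull : A \in unitmx) (hAhur : hurwitz A)
  (hPreal : P \is a realmx) (hPsym : P^T = P) :
  (forall x : 'cV[C]_n, x \is a realmx -> A *m x = - gradU P x + fU A P x) /\
  (optimal A P ->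
     P *m A + A^T *m P + 2%:R *: (P *m P) = 0 /\
     forall x : 'cV[C]_n, x \is a realmx -> ((gradU P x)^T *m fU A P x) 0 0 = 0).
Proof.
split=> [x _ | [[_ [_ hfeas]] hopt]].
  by rewrite /gradU /fU mulmxDl addrCA addNr addr0.
have M0 := optimal_riccati_eq0 hAreal hPreal hPsym hfeas hopt.
split=> // x _; rewrite /gradU /fU -/(vdot _ _).
have /eqP := vdot_riccati A hPsym x.
by rewrite M0 mul0mx vdotC vdot0l eq_sym mulf_eq0 pnatr_eq0 => /eqP.
Qed.
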